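(* Let $\mathbf A\in\mathbb C^{m\times n}$ with $m\ge n$, and let $\mathbf A=\mathbf Q\mathbf R$ be its (thin) QR decomposition, partitioned as $[\mathbf A_1\ \mathbf A_2]=[\mathbf Q_1\ \mathbf Q_2]\begin{bmatrix}\mathbf R_{11}&\mathbf R_{12}\\ \mathbf 0&\mathbf R_{22}\end{bmatrix}$ with $\mathbf A_1\in\mathbb C^{m\times(n-k)}$ and $\mathbf R_{22}\in\mathbb C^{k\times k}$. If $\sigma_i(\mathbf A)<\sigma_1(\mathbf A_1)$ for $i=1,\dots,k$, then for $i=1,\dots,k$, $$\sigma_i(\mathbf R_{22})\le\Big[\frac{\sigma_n(\mathbf A)}{\sigma_1(\mathbf A_1)}+1\Big]\sigma_i(\mathbf A).$$
   Context: For a matrix $\mathbf B\in\mathbb C^{p\times q}$ with $p\ge q$, $\sigma_1(\mathbf B)\le\dots\le\sigma_q(\mathbf B)$ denote its singular values in increasing order; thus $\sigma_1(\mathbf A_1)$ is the smallest singular value of $\mathbf A_1$ and $\sigma_n(\mathbf A)$ the largest of $\mathbf A$. *)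

(* Complex numbers are modelled by an arbitrary
   numClosedFieldType C (e.g. algC); conjugation is Num.conj. *)
From HB Require Import structures.
From mathcomp Require Import all_boot all_order all_algebra.
Set Implicit Arguments. Unset Strict Implicit. Unset Printing Implicit Defensive.
Import Order.TTheory GRing.Theory Num.Theory.
Local Open Scope ring_scope.

Definition ctmx (C : numClosedFieldType) (p q : nat) (A : 'M[C]_(p, q)) : 'M[C]_(q, p) :=
  (map_mx Num.conj A)^T.

Definition unitary_mx (C : numClosedFieldType) (p : nat) (U : 'M[C]_p) : Prop :=
  U *m ctmx U = 1%:M.

Definition upper_trig (C : numClosedFieldType) (p : nat) (R : 'M[C]_p) : Prop :=
  forall i j : 'I_p, (j < i)%N -> R i j = 0.

Definition rdiag_mx (C : numClosedFieldType) (p q : nat) (s : seq C) : 'M[C]_(p, q) :=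
  \matrix_(i < p, j < q) (if (i : nat) == (j : nat) then s`_i else 0).

(* [svals A s] : s = [:: sigma_1; ...; sigma_q] is the list of singular values
   of A (p >= q), in increasing order, i.e. A = U diag(s) V^* is an SVD. *)
Definition svals (C : numClosedFieldType) (p q : nat) (A : 'M[C]_(p, q)) (s : seq C) : Prop :=
  [/\ size s = q, sorted <=%R s, all (fun x => 0 <= x) s &
      exists (U : 'M[C]_p) (V : 'M[C]_q),
        [/\ unitary_mx U, unitary_mx V & A = U *m rdiag_mx p q s *m ctmx V]].

From HB Require Import structures.
From mathcomp Require Import all_boot all_order all_algebra.
From mathcomp Require Import ring.

Set Implicit Arguments.
Unset Strict Implicit.
Unset Printing Implicit Defensive.
Import Order.TTheory GRing.Theory Num.Theory.
Local Open Scope ring_scope.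

(* Pick y != 0 in the span of the right singular vectors of A belonging to
   sigma_1(A), ..., sigma_i(A), whose bottom block w lies in the span of the
   right singular vectors of R22 belonging to sigma_i(R22), ..., sigma_k(R22);
   such a y exists by a dimension count.  With y = (y1, w) and lam = sigma_i(A)^2,
     |R11 y1 + R12 w|^2 + |R22 w|^2 = |A y|^2 <= lam (|y1|^2 + |w|^2),
     |R11 y1| = |A1 y1| >= sigma_1(A1) |y1|,
     |R12 w|^2 + |R22 w|^2 = |A (0, w)|^2 <= sigma_n(A)^2 |w|^2,
   and eliminating y1 gives
   sigma_1(A1) |R22 w| <= sigma_i(A) (sigma_n(A) + sigma_1(A1)) |w|,
   while |R22 w| >= sigma_i(R22) |w|. *)

Section SquaredNorm.
Variable C : numClosedFieldType.

Lemma ctmxE p q (A : 'M[C]_(p, q)) i j : ctmx A i j = (A j i)^*.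
Proof. by rewrite !mxE. Qed.

Lemma ctmxM p q r (A : 'M[C]_(p, q)) (B : 'M_(q, r)) :
  ctmx (A *m B) = ctmx B *m ctmx A.
Proof. by rewrite /ctmx map_mxM trmx_mul. Qed.

Definition sqnorm p (x : 'cV[C]_p) : C := \sum_(i < p) `|x i 0| ^+ 2.

Lemma sqnorm_ge0 p (x : 'cV[C]_p) : 0 <= sqnorm x.
Proof. by apply: sumr_ge0 => i _; rewrite exprn_ge0. Qed.

Lemma sqnorm_eq0 p (x : 'cV[C]_p) : sqnorm x = 0 -> x = 0.
Proof.
move=> x0; apply/matrixP=> i j; rewrite ord1 mxE.
have /eqP : `|x i 0| ^+ 2 = 0.
  by apply: (psumr_eq0P _ x0) => // l _; rewrite exprn_ge0.
by rewrite expf_eq0 /= normr_eq0 => /eqP.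
Qed.

Lemma sqnorm0 p : sqnorm (0 : 'cV[C]_p) = 0.
Proof. by rewrite /sqnorm big1 // => i _; rewrite mxE normr0 expr0n. Qed.

Lemma sqnormN p (x : 'cV[C]_p) : sqnorm (- x) = sqnorm x.
Proof. by apply: eq_bigr => i _; rewrite mxE normrN. Qed.

Lemma sqnormE p (x : 'cV[C]_p) : sqnorm x = (ctmx x *m x) 0 0.
Proof. by rewrite mxE; apply: eq_bigr => i _; rewrite ctmxE normCK mulrC. Qed.

Lemma sqnorm_col_mx p q (a : 'cV[C]_p) (b : 'cV[C]_q) :
  sqnorm (col_mx a b) = sqnorm a + sqnorm b.
Proof.
rewrite /sqnorm big_split_ord /=.
by congr (_ + _); apply: eq_bigr => i _; rewrite (col_mxEu, col_mxEd).
Qed.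

Lemma sqnorm_isometry p q (U : 'M[C]_(p, q)) x :
  ctmx U *m U = 1%:M -> sqnorm (U *m x) = sqnorm x.
Proof. by move=> UU; rewrite !sqnormE ctmxM mulmxA -(mulmxA _ _ U) UU mulmx1. Qed.

Lemma unitary_mxC p (U : 'M[C]_p) : unitary_mx U -> ctmx U *m U = 1%:M.
Proof. exact: mulmx1C. Qed.

Lemma unitary_unitmx p (U : 'M[C]_p) : unitary_mx U -> U \in unitmx.
Proof. by case/mulmx1_unit. Qed.

Lemma mulmx_isometry_eq0 p q (U : 'M[C]_(p, q)) (x : 'cV[C]_q) :
  ctmx U *m U = 1%:M -> (U *m x == 0) = (x == 0).
Proof.
move=> UU; apply/eqP/eqP => [Ux0|->]; last exact: mulmx0.
by rewrite -[x]mul1mx -UU -mulmxA Ux0 mulmx0.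
Qed.

Lemma normD_sqr_weighted (a b u v : C) : 0 <= a -> 0 <= b ->
  a * b * `|u + v| ^+ 2 <= b * (a + b) * `|u| ^+ 2 + a * (a + b) * `|v| ^+ 2.
Proof.
move=> a_ge0 b_ge0; rewrite -subr_ge0.
have -> : b * (a + b) * `|u| ^+ 2 + a * (a + b) * `|v| ^+ 2 - a * b * `|u + v| ^+ 2
          = `|b * u - a * v| ^+ 2.
  rewrite !normCK !rmorphD rmorphN !rmorphM /=.
  rewrite (conj_Creal (ger0_real a_ge0)) (conj_Creal (ger0_real b_ge0)).
  ring.
by rewrite exprn_ge0.
Qed.

Lemma sqnormD_weighted p (a b : C) (x y : 'cV[C]_p) : 0 <= a -> 0 <= b ->
  a * b * sqnorm (x + y) <= b * (a + b) * sqnorm x + a * (a + b) * sqnorm y.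
Proof.
move=> a_ge0 b_ge0; rewrite /sqnorm !mulr_sumr -big_split /=.
by apply: ler_sum => i _; rewrite mxE; apply: normD_sqr_weighted.
Qed.

End SquaredNorm.

(* [s1 ^+ 2] times the slack of the goal is a nonnegative combination of the
   slacks of the four hypotheses. *)
Lemma upper_block_estimate (R : numDomainType) (lam s1 sig P rho Y W Q r : R) :
  0 <= lam -> lam < s1 ^+ 2 -> 0 <= s1 -> 0 <= sig -> 0 <= W ->
  P + rho <= lam * (Y + W) -> s1 ^+ 2 * Y <= Q ->
  lam * (s1 ^+ 2 - lam) * Q <= (s1 ^+ 2 - lam) * s1 ^+ 2 * P + lam * s1 ^+ 2 * r ->
  r + rho <= sig ^+ 2 * W ->
  s1 ^+ 2 * rho <= lam * W * (sig + s1) ^+ 2.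
Proof.
move=> lam_ge0 lam_lt s1_ge0 sig_ge0 W_ge0 h1 h2 h3 h4.
set mu := s1 ^+ 2 in lam_lt h2 h3 *.
have mu_gt0 : 0 < mu by apply: le_lt_trans lam_lt.
have mu_lam_ge0 : 0 <= mu - lam by rewrite subr_ge0 ltW.
rewrite -subr_ge0 -(pmulr_rge0 _ mu_gt0).
have -> : mu * (lam * W * (sig + s1) ^+ 2 - mu * rho) =
    mu * (mu - lam) * (lam * (Y + W) - (P + rho))
  + lam * (mu - lam) * (Q - mu * Y)
  + ((mu - lam) * mu * P + lam * mu * r - lam * (mu - lam) * Q)
  + lam * mu * (sig ^+ 2 * W - (r + rho))
  + mu * lam * W * (lam + (sig * s1 + sig * s1)) by rewrite /mu; ring.
have mu_ge0 := ltW mu_gt0.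
apply: addr_ge0; last by rewrite !mulr_ge0 // !addr_ge0 // mulr_ge0.
apply: addr_ge0; last by rewrite !mulr_ge0 // subr_ge0.
apply: addr_ge0; last by rewrite subr_ge0.
by apply: addr_ge0; rewrite !mulr_ge0 // subr_ge0.
Qed.

Lemma nth_nneg (R : numDomainType) (s : seq R) j :
  all (fun x => 0 <= x) s -> 0 <= s`_j.
Proof.
move=> s_ge0.
by have [/(all_nthP 0 s_ge0)//|j_ge] := ltnP j (size s); rewrite nth_default.
Qed.

Section SingularValueDecomposition.
Variables (C : numClosedFieldType) (p q : nat) (M : 'M[C]_(p, q)) (s : seq C).
Variables (U : 'M[C]_p) (V : 'M[C]_q).
Hypotheses (le_qp : (q <= p)%N) (size_s : size s = q) (sorted_s : sorted <=%R s).
Hypotheses (s_ge0 : all (fun x => 0 <= x) s) (unitary_U : unitary_mx U).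
Hypotheses (unitary_V : unitary_mx V) (svd_M : M = U *m rdiag_mx p q s *m ctmx V).

Let nth_s_sqr_le i (j : 'I_q) : (i <= j)%N -> s`_i ^+ 2 <= `|s`_j| ^+ 2.
Proof.
move=> le_ij; rewrite ger0_norm ?nth_nneg // ler_sqr ?nnegrE ?nth_nneg //.
by apply: (le_sorted_leq_nth 0 sorted_s); rewrite ?inE ?size_s ?(leq_ltn_trans le_ij).
Qed.

Let nth_s_sqr_ge i (j : 'I_q) : (j <= i)%N -> (i < q)%N -> `|s`_j| ^+ 2 <= s`_i ^+ 2.
Proof.
move=> le_ji lt_iq; rewrite ger0_norm ?nth_nneg // ler_sqr ?nnegrE ?nth_nneg //.
by apply: (le_sorted_leq_nth 0 sorted_s); rewrite ?inE ?size_s.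
Qed.

Lemma sqnorm_rdiag_mul (e : 'cV[C]_q) :
  sqnorm (rdiag_mx p q s *m e) = \sum_(j < q) `|s`_j| ^+ 2 * `|e j 0| ^+ 2.
Proof.
transitivity (\sum_(r < p) \sum_(j < q | r == widen_ord le_qp j)
                 `|s`_j| ^+ 2 * `|e j 0| ^+ 2); last first.
  rewrite (exchange_big_dep xpredT) //=; apply: eq_bigr => j _.
  by rewrite (big_pred1 (widen_ord le_qp j)).
apply: eq_bigr => r _; rewrite mxE.
have [lt_rq|le_qr] := ltnP r q; last first.
  rewrite !big1 ?normr0 ?expr0n // => j.
    by move=> /eqP/(congr1 val)/= eq_rj; move: (ltn_ord j); rewrite -eq_rj ltnNge le_qr.
  rewrite mxE; have -> : ((r : nat) == j) = false.
    by apply/negbTE; rewrite neq_ltn (leq_trans (ltn_ord j) le_qr) orbT.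
  by rewrite mul0r.
rewrite [RHS](big_pred1 (Ordinal lt_rq)); last first.
  by move=> j /=; rewrite -!val_eqE /= eq_sym.
rewrite (bigD1 (Ordinal lt_rq)) //= big1 ?addr0; last first.
  move=> j ne_j; rewrite mxE; have -> : ((r : nat) == j) = false.
    by apply/negbTE; apply: contra ne_j => /eqP eq_rj; apply/eqP/val_inj.
  by rewrite mul0r.
by rewrite mxE eqxx normrM exprMn.
Qed.

Lemma sqnorm_svd_mul (e : 'cV[C]_q) :
  sqnorm (M *m (V *m e)) = \sum_(j < q) `|s`_j| ^+ 2 * `|e j 0| ^+ 2.
Proof.
rewrite svd_M -!mulmxA (mulmxA (ctmx V)) unitary_mxC // mul1mx.
by rewrite sqnorm_isometry ?unitary_mxC // sqnorm_rdiag_mul.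
Qed.

Lemma sqnorm_svd_le i (e : 'cV[C]_q) : (i < q)%N ->
  (forall j : 'I_q, (i < j)%N -> e j 0 = 0) ->
  sqnorm (M *m (V *m e)) <= s`_i ^+ 2 * sqnorm (V *m e).
Proof.
move=> lt_iq e_supp; rewrite sqnorm_svd_mul sqnorm_isometry ?unitary_mxC //.
rewrite mulr_sumr; apply: ler_sum => j _; have [lt_ij|le_ji] := ltnP i j.
  by rewrite e_supp // normr0 expr0n /= !mulr0.
by rewrite ler_wpM2r ?exprn_ge0 ?nth_s_sqr_ge.
Qed.

Lemma sqnorm_svd_ge i (e : 'cV[C]_q) :
  (forall j : 'I_q, (j < i)%N -> e j 0 = 0) ->
  s`_i ^+ 2 * sqnorm (V *m e) <= sqnorm (M *m (V *m e)).
Proof.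
move=> e_supp; rewrite sqnorm_svd_mul sqnorm_isometry ?unitary_mxC //.
rewrite mulr_sumr; apply: ler_sum => j _; have [lt_ji|le_ij] := ltnP j i.
  by rewrite e_supp // normr0 expr0n /= !mulr0.
by rewrite ler_wpM2r ?exprn_ge0 ?nth_s_sqr_le.
Qed.

End SingularValueDecomposition.

Section SingularValueBounds.
Variables (C : numClosedFieldType) (p q : nat) (M : 'M[C]_(p, q)) (s : seq C).
Hypotheses (le_qp : (q <= p)%N) (svals_M : svals M s).

Let svd_coord_ind (P : 'cV[C]_q -> Prop) :
  (forall (U : 'M_p) (V : 'M_q) e, unitary_mx U -> unitary_mx V ->
     M = U *m rdiag_mx p q s *m ctmx V -> P (V *m e)) -> forall x, P x.
Proof.
case: svals_M => _ _ _ [U [V [unitary_U unitary_V svd_M]]] PV x.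
by rewrite -[x]mul1mx -unitary_V -mulmxA; exact: PV unitary_U unitary_V svd_M.
Qed.

Lemma svals_sqnorm_ge_min (x : 'cV[C]_q) : s`_0 ^+ 2 * sqnorm x <= sqnorm (M *m x).
Proof.
case: svals_M => size_s sorted_s s_ge0 _; move: x.
apply: svd_coord_ind => U V e unitary_U unitary_V svd_M.
exact: (sqnorm_svd_ge le_qp size_s sorted_s s_ge0 unitary_U unitary_V svd_M).
Qed.

Lemma svals_sqnorm_le_max (x : 'cV[C]_q) : (0 < q)%N ->
  sqnorm (M *m x) <= s`_q.-1 ^+ 2 * sqnorm x.
Proof.
case: svals_M => size_s sorted_s s_ge0 _ q_gt0; move: x.
apply: svd_coord_ind => U V e unitary_U unitary_V svd_M.
apply: (sqnorm_svd_le le_qp size_s sorted_s s_ge0 unitary_U unitary_V svd_M).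
  by rewrite prednK.
by move=> j; rewrite ltnNge -ltnS prednK // ltn_ord.
Qed.

End SingularValueBounds.

Section TestVector.
Variable F : fieldType.

Lemma colsub1_mulE n a (f : 'I_a -> 'I_n) (x : 'cV[F]_a) j :
  (colsub f 1%:M *m x) j 0 = \sum_(l | f l == j) x l 0.
Proof.
rewrite mxE [RHS]big_mkcond /=; apply: eq_bigr => l _.
by rewrite !mxE eq_sym; case: eqP; rewrite ?mul1r ?mul0r.
Qed.

Lemma colsub1_mul_inj n a (f : 'I_a -> 'I_n) (x : 'cV[F]_a) l :
  injective f -> (colsub f 1%:M *m x) (f l) 0 = x l 0.
Proof. by move=> f_inj; rewrite colsub1_mulE (big_pred1 l) // => l'; apply: inj_eq. Qed.

Lemma colsub1_mul_out n a (f : 'I_a -> 'I_n) (x : 'cV[F]_a) j :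
  (forall l, f l != j) -> (colsub f 1%:M *m x) j 0 = 0.
Proof. by move=> f_nj; rewrite colsub1_mulE big_pred0 // => l; apply/negbTE. Qed.

Lemma colsub1_mul_eq0 n a (f : 'I_a -> 'I_n) (x : 'cV[F]_a) :
  injective f -> colsub f 1%:M *m x = 0 -> x = 0.
Proof.
move=> f_inj fx0; apply/matrixP => l j.
by rewrite ord1 -(colsub1_mul_inj x l f_inj) fx0 !mxE.
Qed.

Lemma exists_common_image k a b (B1 : 'M[F]_(k, a)) (B2 : 'M[F]_(k, b)) :
  (k < a + b)%N ->
  exists (x : 'cV[F]_a) (z : 'cV[F]_b), col_mx x z != 0 /\ B1 *m x = B2 *m z.
Proof.
move=> lt_k; pose N := row_mx B1 (- B2).
have : kermx N^T != 0.
  by rewrite kermx_eq0 /row_free neq_ltn (leq_ltn_trans (rank_leq_col _) lt_k).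
case/rowV0Pn => v /sub_kermxP vN v_neq0.
exists (usubmx v^T), (dsubmx v^T); split; first by rewrite vsubmxK trmx_eq0.
have /eqP := congr1 trmx vN.
rewrite trmx_mul trmxK trmx0 -[X in N *m X](vsubmxK v^T) /N mul_row_col.
by rewrite mulNmx subr_eq0 => /eqP.
Qed.

Lemma exists_test_vector n1 k (V : 'M[F]_(n1 + k)) (W : 'M[F]_k) i :
  W \in unitmx -> (i < k)%N ->
  exists (e : 'cV[F]_(n1 + k)) (e2 : 'cV[F]_k),
    [/\ e != 0, forall j : 'I_(n1 + k), (i < j)%N -> e j 0 = 0,
        forall j : 'I_k, (j < i)%N -> e2 j 0 = 0 & dsubmx (V *m e) = W *m e2].
Proof.
move=> W_unit lt_ik.
have lt_in : (i < n1 + k)%N by rewrite (leq_trans lt_ik) ?leq_addl.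
have lt_g (l : 'I_(k - i)) : (i + l < k)%N by rewrite -ltn_subRL.
pose f (l : 'I_i.+1) : 'I_(n1 + k) := widen_ord lt_in l.
pose g (l : 'I_(k - i)) : 'I_k := Ordinal (lt_g l).
have f_inj : injective f by move=> l l' /(congr1 val) /= /ord_inj.
have g_inj : injective g by move=> l l' /(congr1 val) /= /addnI /ord_inj.
have lt_dim : (k < i.+1 + (k - i))%N by rewrite addSn subnKC // ltnW.
have [x [z [xz_neq0 Exz]]] :=
  exists_common_image (dsubmx V *m colsub f 1%:M) (W *m colsub g 1%:M) lt_dim.
exists (colsub f 1%:M *m x), (colsub g 1%:M *m z); split.
- apply: contraNneq xz_neq0 => /(colsub1_mul_eq0 f_inj) x0.
  move: Exz; rewrite x0 mulmx0 -mulmxA => /esym/(congr1 (mulmx (invmx W))).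
  by rewrite (mulKmx W_unit) mulmx0 => /(colsub1_mul_eq0 g_inj) ->; rewrite col_mx0.
- move=> j lt_ij; apply: colsub1_mul_out => l; apply: contraTneq lt_ij => <-.
  by rewrite -leqNgt -ltnS /f /=.
- move=> j lt_ji; apply: colsub1_mul_out => l; apply: contraTneq lt_ji => <-.
  by rewrite -leqNgt /g /= leq_addr.
- by rewrite -mul_dsub_mx !mulmxA.
Qed.

End TestVector.

Section UpperBlockTriangular.
Variables (C : numClosedFieldType) (n1 k : nat).
Variables (R11 : 'M[C]_n1) (R12 : 'M[C]_(n1, k)) (R22 : 'M[C]_k).
Variables (lam s1 sig : C) (y1 : 'cV[C]_n1) (w : 'cV[C]_k).
Let R := block_mx R11 R12 0 R22.
Hypotheses (lam_ge0 : 0 <= lam) (lam_lt : lam < s1 ^+ 2).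
Hypotheses (s1_ge0 : 0 <= s1) (sig_ge0 : 0 <= sig).
Hypothesis R_y_le : sqnorm (R *m col_mx y1 w) <= lam * sqnorm (col_mx y1 w).
Hypothesis R_top_ge : forall z : 'cV_n1, s1 ^+ 2 * sqnorm z <= sqnorm (R *m col_mx z 0).
Hypothesis R_le : forall x : 'cV_(n1 + k), sqnorm (R *m x) <= sig ^+ 2 * sqnorm x.

Let R_mul (a : 'cV_n1) (b : 'cV_k) : R *m col_mx a b = col_mx (R11 *m a + R12 *m b) (R22 *m b).
Proof. by rewrite mul_block_col mul0mx add0r. Qed.

Let R_y_le' : sqnorm (R11 *m y1 + R12 *m w) + sqnorm (R22 *m w)
              <= lam * (sqnorm y1 + sqnorm w).
Proof. by move: R_y_le; rewrite R_mul !sqnorm_col_mx. Qed.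

Let R11_ge (z : 'cV_n1) : s1 ^+ 2 * sqnorm z <= sqnorm (R11 *m z).
Proof. by move: (R_top_ge z); rewrite R_mul !mulmx0 addr0 sqnorm_col_mx sqnorm0 addr0. Qed.

Let R12_R22_le : sqnorm (R12 *m w) + sqnorm (R22 *m w) <= sig ^+ 2 * sqnorm w.
Proof. by move: (R_le (col_mx 0 w)); rewrite R_mul !mulmx0 !sqnorm_col_mx sqnorm0 !add0r. Qed.

Lemma sqnorm_bottom_gt0 : col_mx y1 w != 0 -> 0 < sqnorm w.
Proof.
move=> yw_neq0; rewrite lt_def sqnorm_ge0 andbT.
apply: contraNneq yw_neq0 => /sqnorm_eq0 w0.
have : s1 ^+ 2 * sqnorm y1 <= lam * sqnorm y1.
  apply: le_trans (R11_ge y1) _; move: R_y_le'.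
  by rewrite w0 !mulmx0 addr0 sqnorm0 !addr0.
rewrite -subr_ge0 -mulrBl nmulr_rge0 ?subr_lt0 // => y1_le0.
have /sqnorm_eq0 -> : sqnorm y1 = 0 by apply/eqP; rewrite eq_le y1_le0 sqnorm_ge0.
by rewrite w0 col_mx0.
Qed.

Lemma sqnorm_bottom_le :
  s1 ^+ 2 * sqnorm (R22 *m w) <= lam * sqnorm w * (sig + s1) ^+ 2.
Proof.
apply: (upper_block_estimate lam_ge0 lam_lt s1_ge0 sig_ge0 (sqnorm_ge0 w)
          R_y_le' (R11_ge y1) _ R12_R22_le).
have lam_le : 0 <= s1 ^+ 2 - lam by rewrite subr_ge0 ltW.
have := sqnormD_weighted (R11 *m y1 + R12 *m w) (- (R12 *m w)) lam_ge0 lam_le.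
by rewrite addrK sqnormN [lam + _]addrC subrK.
Qed.

End UpperBlockTriangular.

Lemma upper_trig_dlsubmx (C : numClosedFieldType) n1 k (R : 'M[C]_(n1 + k)) :
  upper_trig R -> dlsubmx R = 0.
Proof.
move=> R_trig; apply/matrixP => i j; rewrite !mxE; apply: R_trig => /=.
exact: leq_trans (ltn_ord j) (leq_addr i n1).
Qed.

Section QRDecomposition.
Variables (C : numClosedFieldType) (m n1 k : nat).
Variables (A Q : 'M[C]_(m, n1 + k)) (R : 'M[C]_(n1 + k)) (sA sA1 : seq C).
Hypotheses (n1_gt0 : (0 < n1)%N) (le_nm : (n1 + k <= m)%N).
Hypotheses (QQ : ctmx Q *m Q = 1%:M) (R_trig : upper_trig R) (AQR : A = Q *m R).
Hypotheses (svals_A : svals A sA) (svals_A1 : svals (lsubmx A) sA1).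
Variables (lam : C) (y : 'cV[C]_(n1 + k)).
Hypotheses (lam_ge0 : 0 <= lam) (lam_lt : lam < sA1`_0 ^+ 2).
Hypothesis A_y_le : sqnorm (A *m y) <= lam * sqnorm y.

Let sqnormAR x : sqnorm (A *m x) = sqnorm (R *m x).
Proof. by rewrite AQR -mulmxA sqnorm_isometry. Qed.

Let R_block : R = block_mx (ulsubmx R) (ursubmx R) 0 (drsubmx R).
Proof. by rewrite -(upper_trig_dlsubmx R_trig) submxK. Qed.

Let R_y_le : sqnorm (block_mx (ulsubmx R) (ursubmx R) 0 (drsubmx R)
                       *m col_mx (usubmx y) (dsubmx y))
             <= lam * sqnorm (col_mx (usubmx y) (dsubmx y)).
Proof. by rewrite -R_block vsubmxK -sqnormAR. Qed.

Let R_top_ge (z : 'cV_n1) :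
  sA1`_0 ^+ 2 * sqnorm z
  <= sqnorm (block_mx (ulsubmx R) (ursubmx R) 0 (drsubmx R) *m col_mx z 0).
Proof.
rewrite -R_block -sqnormAR -[A in A *m _](hsubmxK A) mul_row_col mulmx0 addr0.
by apply: (svals_sqnorm_ge_min _ svals_A1); apply: leq_trans le_nm; rewrite leq_addr.
Qed.

Let R_le (x : 'cV_(n1 + k)) :
  sqnorm (block_mx (ulsubmx R) (ursubmx R) 0 (drsubmx R) *m x)
  <= sA`_(n1 + k).-1 ^+ 2 * sqnorm x.
Proof.
rewrite -R_block -sqnormAR; apply: (svals_sqnorm_le_max le_nm svals_A).
exact: leq_trans n1_gt0 (leq_addr _ _).
Qed.

Lemma qr_sqnorm_bottom_gt0 : y != 0 -> 0 < sqnorm (dsubmx y).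
Proof.
by move=> y_neq0; apply: sqnorm_bottom_gt0 lam_lt R_y_le R_top_ge _; rewrite vsubmxK.
Qed.

Lemma qr_sqnorm_bottom_le :
  sA1`_0 ^+ 2 * sqnorm (drsubmx R *m dsubmx y)
  <= lam * sqnorm (dsubmx y) * (sA`_(n1 + k).-1 + sA1`_0) ^+ 2.
Proof.
case: svals_A svals_A1 => _ _ sA_ge0 _ [_ _ sA1_ge0 _].
exact: sqnorm_bottom_le lam_ge0 lam_lt (nth_nneg _ sA1_ge0) (nth_nneg _ sA_ge0)
         R_y_le R_top_ge R_le.
Qed.

End QRDecomposition.

Lemma le_scaled_of_sqr (F : numFieldType) (a b s1 sig : F) :
  0 <= a -> 0 <= b -> 0 < s1 -> 0 <= sig ->
  s1 ^+ 2 * b ^+ 2 <= a ^+ 2 * (sig + s1) ^+ 2 -> b <= (sig / s1 + 1) * a.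
Proof.
move=> a_ge0 b_ge0 s1_gt0 sig_ge0; have s1_ge0 := ltW s1_gt0.
rewrite -!exprMn ler_sqr ?nnegrE ?mulr_ge0 ?addr_ge0 // => le_sb.
rewrite -(ler_pM2l s1_gt0).
have -> : s1 * ((sig / s1 + 1) * a) = a * (sig + s1) by field; rewrite gt_eqF.
exact: le_sb.
Qed.

Theorem lemma3 (C : numClosedFieldType) (m n1 k : nat)
    (A Q : 'M[C]_(m, n1 + k)) (R : 'M[C]_(n1 + k))
    (sA sA1 sR22 : seq C) :
  (0 < n1)%N -> (n1 + k <= m)%N ->
  ctmx Q *m Q = 1%:M -> upper_trig R -> A = Q *m R ->
  svals A sA -> svals (lsubmx A) sA1 -> svals (drsubmx R) sR22 ->
  (forall i, (i < k)%N -> sA`_i < sA1`_0) ->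
  forall i, (i < k)%N ->
    sR22`_i <= (sA`_(n1 + k).-1 / sA1`_0 + 1) * sA`_i.
Proof.
move=> n1_gt0 le_nm QQ R_trig AQR svals_A svals_A1 svals_R22 lt_sA_sA1 i lt_ik.
have [szA srtA sA_ge0 [UA [VA [UA_u VA_u svdA]]]] := svals_A.
have [szR srtR sR_ge0 [U2 [V2 [U2_u V2_u svdR]]]] := svals_R22.
have [e [e2 [e_neq0 e_supp e2_supp Ee]]] :=
  exists_test_vector VA (unitary_unitmx V2_u) lt_ik.
have sA_i_ge0 : 0 <= sA`_i := nth_nneg i sA_ge0.
have s1_gt0 : 0 < sA1`_0 := le_lt_trans sA_i_ge0 (lt_sA_sA1 i lt_ik).
have lam_lt : sA`_i ^+ 2 < sA1`_0 ^+ 2.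
  by rewrite ltr_sqr ?nnegrE ?lt_sA_sA1 // ltW.
have A_y_le : sqnorm (A *m (VA *m e)) <= sA`_i ^+ 2 * sqnorm (VA *m e).
  apply: (sqnorm_svd_le le_nm szA srtA sA_ge0 UA_u VA_u svdA _ e_supp).
  by rewrite (leq_trans lt_ik) ?leq_addl.
have y_neq0 : VA *m e != 0 by rewrite mulmx_isometry_eq0 ?unitary_mxC.
have w_gt0 := qr_sqnorm_bottom_gt0 le_nm QQ R_trig AQR svals_A1 lam_lt A_y_le y_neq0.
have R22_w_le := qr_sqnorm_bottom_le n1_gt0 le_nm QQ R_trig AQR svals_A svals_A1
                   (exprn_ge0 2 sA_i_ge0) lam_lt A_y_le.
have R22_w_ge : sR22`_i ^+ 2 * sqnorm (dsubmx (VA *m e))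
                <= sqnorm (drsubmx R *m dsubmx (VA *m e)).
  by rewrite Ee; apply: (sqnorm_svd_ge (leqnn k) szR srtR sR_ge0 U2_u V2_u svdR).
apply: le_scaled_of_sqr; rewrite ?nth_nneg //.
rewrite -(ler_pM2r w_gt0) [X in _ <= X]mulrAC.
by apply: le_trans R22_w_le; rewrite -mulrA ler_pM2l ?exprn_gt0.
Qed.
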